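(* Let $R$ be a commutative ring with nonzero identity, $\delta$ an expansion of ideals of $R$, and $I$ a proper ideal of $R$ with $I\subseteq\sqrt{0}$. If $I$ is a $\delta$-primary ideal of $R$, then $I$ is a $\delta$-$n$-ideal of $R$. Conversely, if $I=\sqrt{0}$ and $I$ is a $\delta$-$n$-ideal, then $I$ is $\delta$-primary.
   Context: An expansion of ideals of a ring $R$ is a map $\delta$ from the set of ideals of $R$ to itself such that $I\subseteq\delta(I)$ for every ideal $I$, and $\delta(I)\subseteq\delta(J)$ whenever $I\subseteq J$. $\sqrt{0}$ denotes the nilradical of $R$. Given an expansion $\delta$, a proper ideal $I$ of $R$ is a $\delta$-$n$-ideal if whenever $a,b\in R$ with $ab\in I$ and $a\notin\sqrt{0}$, then $b\in\delta(I)$; it is $\delta$-primary if whenever $a,b\in R$ with $ab\in I$ and $a\notin I$, then $b\in\delta(I)$. *)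

From mathcomp Require Import all_boot all_algebra.
Set Implicit Arguments. Unset Strict Implicit. Unset Printing Implicit Defensive.
Import GRing.Theory.
Local Open Scope ring_scope.

Definition is_ideal (R : comNzRingType) (I : R -> Prop) : Prop :=
  [/\ I 0, (forall x y, I x -> I y -> I (x + y)),
      (forall x, I x -> I (- x)) & (forall r x, I x -> I (r * x))].

Definition proper_ideal_p (R : comNzRingType) (I : R -> Prop) : Prop :=
  is_ideal I /\ ~ I 1.

Definition nilrad (R : comNzRingType) : R -> Prop :=
  fun x => exists n : nat, x ^+ n = 0.

Definition expansion (R : comNzRingType) (delta : (R -> Prop) -> (R -> Prop)) : Prop :=
  [/\ (forall I, is_ideal I -> is_ideal (delta I)),
      (forall I, is_ideal I -> forall x, I x -> delta I x) &
      (forall I J, is_ideal I -> is_ideal J ->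
         (forall x, I x -> J x) -> forall x, delta I x -> delta J x)].

Definition delta_n_ideal (R : comNzRingType) (delta : (R -> Prop) -> (R -> Prop))
  (I : R -> Prop) : Prop :=
  proper_ideal_p I /\
  forall a b : R, I (a * b) -> ~ nilrad a -> delta I b.

Definition delta_primary (R : comNzRingType) (delta : (R -> Prop) -> (R -> Prop))
  (I : R -> Prop) : Prop :=
  proper_ideal_p I /\
  forall a b : R, I (a * b) -> ~ I a -> delta I b.

From mathcomp Require Import all_boot all_algebra.
Local Open Scope ring_scope.

Section PrimaryVersusNIdeal.

Variables (R : comNzRingType) (delta : (R -> Prop) -> (R -> Prop)) (I : R -> Prop).

Lemma delta_n_ideal_of_primary :
  (forall x, I x -> nilrad x) -> delta_primary delta I -> delta_n_ideal delta I.
Proof.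
move=> I_sub_nilrad [properI primaryI]; split=> // a b Iab a_not_nil.
by apply: (primaryI a b Iab) => /I_sub_nilrad.
Qed.

Lemma delta_primary_of_n_ideal :
  (forall x, nilrad x -> I x) -> delta_n_ideal delta I -> delta_primary delta I.
Proof.
move=> nilrad_sub_I [properI n_idealI]; split=> // a b Iab a_notin_I.
by apply: (n_idealI a b Iab) => /nilrad_sub_I.
Qed.

End PrimaryVersusNIdeal.

(* Neither direction uses that delta is an expansion. *)
Theorem proposition2p4 (R : comNzRingType) (delta : (R -> Prop) -> (R -> Prop))
  (I : R -> Prop) :
  expansion delta -> proper_ideal_p I -> (forall x, I x -> nilrad x) ->
  (delta_primary delta I -> delta_n_ideal delta I) /\
  ((forall x, I x <-> nilrad x) -> delta_n_ideal delta I -> delta_primary delta I).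
Proof.
move=> _ _ I_sub_nilrad; split; first exact: delta_n_ideal_of_primary.
by move=> I_eq_nilrad; apply: delta_primary_of_n_ideal => x /I_eq_nilrad.
Qed.
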